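(* $\mathsf{COH}$ admits fairness preservation. That is, for all $A_0,A_1\subseteq2^{<\omega}$, every set $C$ fair for $A_0,A_1$, and every uniformly $C$-computable sequence $\vec R$, there is an $\vec R$-cohesive set $G$ with $G\oplus C$ fair for $A_0,A_1$.
   Context: An infinite set $G$ is $\vec R$-cohesive if for each $i$, $G\subseteq^* R_i$ or $G\subseteq^*\overline{R_i}$ (inclusion up to finitely many elements). Strings are finite binary strings, and $\preceq$ is the prefix relation. Two strings are incomparable if neither is a prefix of the other. Matrices. An $m$-by-$n$ matrix $M$ is an array of strings $\sigma_{i,j}$ ($i<m$, $j<n$), with rows $M(i)=(\sigma_{i,0},\dots,\sigma_{i,n-1})$. It is disjoint if each row consists of pairwise incomparable strings. Formulas. An $m$-by-$n$ formula is a formula with distinguished finite-set variables $U_{i,j}$. It is $\Sigma^{0,X}_1$ if it is $\Sigma^0_1$ relative to $X$. Valuations. An $M$-valuation is a tuple $V=(B_{i,j})$ of finite sets $B_{i,j}\subseteq\{\tau:\tau\succeq\sigma_{i,j}\}$. We write $\varphi(V)$ for $\varphi$ evaluated at $U_{i,j}:=B_{i,j}$, and $V(i)=(B_{i,0},\dots,B_{i,n-1})$. We write $V>s$ if all strings occurring in $V$ have length $>s$. Essential. $\varphi$ is essential in $M$ if for every $s$ there is an $M$-valuation $V>s$ with $\varphi(V)$. Diagonalization. An $M$-valuation $V$ diagonalizes against $A_0,A_1$ if for every $i<m$ there are components $L,R$ of $V(i)$ with $L\subseteq A_0$ and $R\subseteq A_1$. Fairness. For $n\ge1$, a set $X$ is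 $n$-fair for $A_0,A_1$ if the following holds: for every $m$, every $\Sigma^{0,X}_1$ $m$-by-$2^nm$ formula $\varphi$, and every $m$-by-$2^nm$ disjoint matrix $M$ in which $\varphi$ is essential, there is an $M$-valuation $V$ diagonalizing against $A_0,A_1$ with $\varphi(V)$. The set $X$ is fair if it is $n$-fair for some $n\ge1$. *)

From mathcomp Require Import all_boot.
Set Implicit Arguments. Unset Strict Implicit. Unset Printing Implicit Defensive.

Fixpoint unpair (n : nat) : nat * nat :=
  match n with
  | 0 => (0, 0)
  | k.+1 => let: (x, y) := unpair k in
            if x is x'.+1 then (x', y.+1) else (y.+1, 0)
  end.
Definition pair (x y : nat) : nat := ((x + y) * (x + y).+1) %/ 2 + y.

Inductive prf : Type :=
| pZero | pSucc | pFst | pSnd | pOracle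
| pComp (f g : prf)
| pPair (f g : prf)
| pRec (f g : prf)
| pMu (f : prf).

Inductive eval (X : nat -> bool) : prf -> nat -> nat -> Prop :=
| evZero x : eval X pZero x 0
| evSucc x : eval X pSucc x x.+1
| evFst x : eval X pFst x (unpair x).1
| evSnd x : eval X pSnd x (unpair x).2
| evOracle x : eval X pOracle x (nat_of_bool (X x))
| evComp f g x y z : eval X g x y -> eval X f y z -> eval X (pComp f g) x z
| evPair f g x y z : eval X f x y -> eval X g x z -> eval X (pPair f g) x (pair y z)
| evRec0 f g x a y : unpair x = (a, 0) -> eval X f a y -> eval X (pRec f g) x y
| evRecS f g x a k y z : unpair x = (a, k.+1) -> eval X (pRec f g) (pair a k) y ->
    eval X g (pair a (pair k y)) z -> eval X (pRec f g) x z
| evMu f x n : eval X f (pair x n) 0 ->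
    (forall k, k < n -> exists v, v <> 0 /\ eval X f (pair x k) v) ->
    eval X (pMu f) x n.

Definition join (G C : nat -> bool) : nat -> bool :=
  fun k => if odd k then C k./2 else G k./2.

Definition unif_computable (C : nat -> bool) (R : nat -> nat -> bool) : Prop :=
  exists e : prf, forall i x, eval C e (pair i x) (nat_of_bool (R i x)).

Definition infinite_set (G : nat -> bool) : Prop := forall N, exists n, N <= n /\ G n.

Definition subset_star (G S : nat -> bool) : Prop := exists N, forall n, N <= n -> G n -> S n.

Definition cohesive (R : nat -> nat -> bool) (G : nat -> bool) : Prop :=
  infinite_set G /\
  forall i, subset_star G (R i) \/ subset_star G (fun n => ~~ R i n).

Definition str := seq bool.
Definition incomparable (s t : str) : bool := ~~ prefix s t && ~~ prefix t s.

Definition smatrix (m n : nat) := 'I_m -> 'I_n -> str.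
Definition valuation (m n : nat) := 'I_m -> 'I_n -> seq str.

Definition disjoint_matrix m n (M : smatrix m n) : Prop :=
  forall (i : 'I_m) (j j' : 'I_n), j != j' -> incomparable (M i j) (M i j').

Definition is_valuation m n (M : smatrix m n) (V : valuation m n) : Prop :=
  forall i j t, t \in V i j -> prefix (M i j) t.

Definition val_gt m n (V : valuation m n) (s : nat) : Prop :=
  forall i j t, t \in V i j -> s < size t.

Fixpoint enc (s : seq nat) : nat :=
  if s is x :: s' then (pair x (enc s')).+1 else 0.
Definition code_str (t : str) : nat := enc (map nat_of_bool t).
(* canonical code of a finite set of strings *)
Definition code_set (B : seq str) : nat := enc (sort leq (undup (map code_str B))).
Definition code_val m n (V : valuation m n) : nat :=
  enc [seq enc [seq code_set (V i j) | j <- enum 'I_n] | i <- enum 'I_m].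

(* phi is a Sigma^{0,X}_1 m-by-n formula in the finite-set variables U_{i,j}
   (semantically: an X-c.e. property of the (canonically coded) valuation) *)
Definition sigma01 (X : nat -> bool) m n (phi : valuation m n -> Prop) : Prop :=
  exists e : prf, forall V, phi V <-> exists y, eval X e (code_val V) y.

Definition essential m n (phi : valuation m n -> Prop) (M : smatrix m n) : Prop :=
  forall s, exists V, is_valuation M V /\ val_gt V s /\ phi V.

Definition diagonalizes m n (V : valuation m n) (A0 A1 : str -> Prop) : Prop :=
  forall i : 'I_m, exists L R : 'I_n,
    (forall t, t \in V i L -> A0 t) /\ (forall t, t \in V i R -> A1 t).

Definition n_fair (n : nat) (X : nat -> bool) (A0 A1 : str -> Prop) : Prop :=
  forall (m : nat) (phi : valuation m (2 ^ n * m) -> Prop) (M : smatrix m (2 ^ n * m)),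
    sigma01 X phi -> disjoint_matrix M -> essential phi M ->
    exists V, is_valuation M V /\ diagonalizes V A0 A1 /\ phi V.

Definition fair (X : nat -> bool) (A0 A1 : str -> Prop) : Prop :=
  exists n, 1 <= n /\ n_fair n X A0 A1.

From mathcomp Require Import all_boot zify.
From Stdlib Require Import Classical ClassicalEpsilon FunctionalExtensionality.
Set Implicit Arguments. Unset Strict Implicit. Unset Printing Implicit Defensive.

(* Mathias forcing with [C]-computable reservoirs.  Cohesiveness comes from
   splitting the reservoir along each [R i].  For a fairness requirement given
   by a [C]-c.e. formula [phi V] = "[e] halts on [V] relative to [G + C]" and a
   disjoint matrix [M], let [psi V] say that [e] halts on [V] relative to
   [(F u F') + C] for some finite [F'] inside the reservoir, [F] the stem.  As
   [psi] is [C]-c.e., if it is essential in [M] the fairness of [C] yields a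
   diagonalizing [V] with [psi V]; adding the witnessing [F'] to the stem and
   cutting the reservoir above the use forces [phi V].  Otherwise [psi] fails
   beyond some [s], and then no [G] meeting the condition satisfies [phi] on a
   valuation above [s], so [phi] is not essential.  Expressing [psi] as a
   [C]-computable search means simulating computations relative to the finite
   variants of the stem, which is done by compiling programs into a staged
   evaluator. *)

Lemma pair_unpair k : pair (unpair k).1 (unpair k).2 = k.
Proof.
elim: k => [//|k IH] /=.
case E: (unpair k) IH => [x y]; rewrite /pair /=.
case: x E => [|x] E /= IH.
- rewrite addn0 -IH add0n addn0.
  have -> : y.+1 * y.+2 = y.+1 * 2 + y * y.+1 by nia.
  by rewrite divnMDl //; lia.
- by rewrite -IH addnS addSn addnS.
Qed.

Lemma unpair_surj x y : exists k, unpair k = (x, y).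
Proof.
suff H s yy : yy <= s -> exists k, unpair k = (s - yy, yy).
  by have [k Hk] := H (x + y) y (leq_addl _ _); exists k; rewrite Hk addnK.
elim: s yy => [|s IH] yy Hy.
  by exists 0; move: Hy; rewrite leqn0 => /eqP ->.
elim: yy Hy => [|yy IHy] Hy.
  by have [k Hk] := IH s (leqnn s); exists k.+1; rewrite /= Hk subnn subn0.
have [k Hk] := IHy (ltnW Hy); exists k.+1; rewrite /= Hk.
by have -> : s.+1 - yy = (s.+1 - yy.+1).+1 by lia.
Qed.

Lemma unpair_pair x y : unpair (pair x y) = (x, y).
Proof. by have [k Hk] := unpair_surj x y; have := pair_unpair k; rewrite Hk => ->. Qed.

(* The derived induction principle of [eval] gives no hypothesis for the
   nonzero values below a [pMu] witness; this one does. *)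
Definition eval_nested_ind (X : nat -> bool) (P : prf -> nat -> nat -> Prop)
  (hZ : forall x, P pZero x 0)
  (hS : forall x, P pSucc x x.+1)
  (hF : forall x, P pFst x (unpair x).1)
  (hSn : forall x, P pSnd x (unpair x).2)
  (hO : forall x, P pOracle x (nat_of_bool (X x)))
  (hC : forall f g x y z, eval X g x y -> P g x y -> eval X f y z -> P f y z ->
     P (pComp f g) x z)
  (hP : forall f g x y z, eval X f x y -> P f x y -> eval X g x z -> P g x z ->
     P (pPair f g) x (pair y z))
  (hR0 : forall f g x a y, unpair x = (a, 0) -> eval X f a y -> P f a y -> P (pRec f g) x y)
  (hRS : forall f g x a k y z, unpair x = (a, k.+1) ->
     eval X (pRec f g) (pair a k) y -> P (pRec f g) (pair a k) y ->
     eval X g (pair a (pair k y)) z -> P g (pair a (pair k y)) z -> P (pRec f g) x z)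
  (hM : forall f x n, eval X f (pair x n) 0 -> P f (pair x n) 0 ->
     (forall k, k < n -> exists v, v <> 0 /\ eval X f (pair x k) v /\ P f (pair x k) v) ->
     P (pMu f) x n) :
  forall e x y, eval X e x y -> P e x y :=
  fix F e x y (H : eval X e x y) {struct H} : P e x y :=
  match H in eval _ e x y return P e x y with
  | evZero x => hZ x
  | evSucc x => hS x
  | evFst x => hF x
  | evSnd x => hSn x
  | evOracle x => hO x
  | evComp f g x y z H1 H2 => hC _ _ _ _ _ H1 (F _ _ _ H1) H2 (F _ _ _ H2)
  | evPair f g x y z H1 H2 => hP _ _ _ _ _ H1 (F _ _ _ H1) H2 (F _ _ _ H2)
  | evRec0 f g x a y E H1 => hR0 _ _ _ _ _ E H1 (F _ _ _ H1)
  | evRecS f g x a k y z E H1 H2 => hRS _ _ _ _ _ _ _ E H1 (F _ _ _ H1) H2 (F _ _ _ H2)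
  | evMu f x n H1 H2 => hM _ _ _ H1 (F _ _ _ H1)
      (fun k Hk => match H2 k Hk with
                   | ex_intro v (conj Hv Hev) => ex_intro _ v (conj Hv (conj Hev (F _ _ _ Hev)))
                   end)
  end.

Lemma bounded_uniform (P : nat -> nat -> Prop) n :
  (forall k u u', u <= u' -> P k u -> P k u') ->
  (forall k, k < n -> exists u, P k u) -> exists u, forall k, k < n -> P k u.
Proof.
move=> Pmono; elim: n => [|n IH] Hex; first by exists 0.
have [u Hu] := IH (fun k Hk => Hex k (ltnW Hk)).
have [u' Hu'] := Hex n (ltnSn n).
exists (maxn u u') => k; rewrite ltnS leq_eqVlt => /orP [/eqP ->|Hk].
- exact: Pmono (leq_maxr u u') Hu'.
- exact: Pmono (leq_maxl u u') (Hu k Hk).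
Qed.

Definition agree_below (u : nat) (X X' : nat -> bool) := forall q, q < u -> X' q = X q.

Lemma agree_below_le u u' X X' : u <= u' -> agree_below u' X X' -> agree_below u X X'.
Proof. by move=> le H q Hq; apply: H; apply: leq_trans le. Qed.

Lemma eval_use X e x y : eval X e x y ->
  exists u, forall X', agree_below u X X' -> eval X' e x y.
Proof.
have maxl u v X' : agree_below (maxn u v) X X' -> agree_below u X X'.
  exact: agree_below_le (leq_maxl u v).
have maxr u v X' : agree_below (maxn u v) X X' -> agree_below v X X'.
  exact: agree_below_le (leq_maxr u v).
elim/eval_nested_ind => {e x y}; try by exists 0 => X' _; constructor.
- by move=> x; exists x.+1 => X' HX; rewrite -HX //; constructor.
- move=> f g x y z _ [u1 H1] _ [u2 H2]; exists (maxn u1 u2) => X' HX.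
  exact: evComp (H1 _ (maxl _ _ _ HX)) (H2 _ (maxr _ _ _ HX)).
- move=> f g x y z _ [u1 H1] _ [u2 H2]; exists (maxn u1 u2) => X' HX.
  exact: evPair (H1 _ (maxl _ _ _ HX)) (H2 _ (maxr _ _ _ HX)).
- by move=> f g x a y E _ [u1 H1]; exists u1 => X' HX; apply: evRec0 E (H1 _ HX).
- move=> f g x a k y z E _ [u1 H1] _ [u2 H2]; exists (maxn u1 u2) => X' HX.
  exact: evRecS E (H1 _ (maxl _ _ _ HX)) (H2 _ (maxr _ _ _ HX)).
- move=> f x n _ [u0 H0] Hlt.
  have [u Hu] : exists u, forall k, k < n -> exists v, v <> 0 /\
      forall X', agree_below u X X' -> eval X' f (pair x k) v.
    apply: bounded_uniform => [k u u' le [v [Hv H]]|k /Hlt [v [Hv [_ [u H]]]]].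
    + by exists v; split=> // X' HX; exact: H (agree_below_le le HX).
    + by exists u, v.
  exists (maxn u0 u) => X' HX; constructor; first exact: H0 (maxl _ _ _ HX).
  move=> k /Hu [v [Hv H]]; exists v; split=> //; exact: H (maxr _ _ _ HX).
Qed.

(* Staged evaluation: [run O s e x] is [e] on [x] with every [pMu] search cut
   off after [s] candidates; [None] means divergence or running out of stages. *)
Fixpoint mu_search (h : nat -> option nat) (n fuel : nat) : option nat :=
  match fuel with
  | 0 => None
  | fuel'.+1 => match h n with
                | None => None
                | Some 0 => Some n
                | Some _ => mu_search h n.+1 fuel'
                end
  end.

Fixpoint rec_iter (fa : option nat) (gs : nat -> nat -> option nat) (k : nat) : option nat :=
  if k is k'.+1 then obind (gs k') (rec_iter fa gs k') else fa.

Fixpoint run (O : nat -> bool) (s : nat) (e : prf) (x : nat) : option nat :=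
  match e with
  | pZero => Some 0
  | pSucc => Some x.+1
  | pFst => Some (unpair x).1
  | pSnd => Some (unpair x).2
  | pOracle => Some (nat_of_bool (O x))
  | pComp f g => obind (run O s f) (run O s g x)
  | pPair f g => match run O s f x, run O s g x with
                 | Some a, Some b => Some (pair a b)
                 | _, _ => None end
  | pRec f g => rec_iter (run O s f (unpair x).1)
                   (fun k y => run O s g (pair (unpair x).1 (pair k y))) (unpair x).2
  | pMu f => mu_search (fun n => run O s f (pair x n)) 0 s
  end.

Lemma mu_search_sound h n fuel r : mu_search h n fuel = Some r ->
  [/\ n <= r, h r = Some 0 & forall k, n <= k < r -> exists v, v <> 0 /\ h k = Some v].
Proof.
elim: fuel n => [//|fuel IH] n /=.
case E: (h n) => [[|v]|] //.
- by case=> <-; split => // k; lia.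
- move/IH => [H1 H2 H3]; split => //; first lia.
  move=> k Hk; case: (ltngtP n k) => Hnk; first (apply: H3; lia).
  + lia.
  + by subst; exists v.+1.
Qed.

Lemma mu_search_complete h n : h n = Some 0 ->
  (forall k, k < n -> exists v, v <> 0 /\ h k = Some v) ->
  forall fuel m, m <= n -> n < m + fuel -> mu_search h m fuel = Some n.
Proof.
move=> Hn Hlt; elim=> [|fuel IH] m Hm Hf /=; first lia.
case: (ltngtP m n) => Hc.
- have [[|v] [Hv ->]] := Hlt m Hc => //; apply: IH; lia.
- lia.
- by subst; rewrite Hn.
Qed.

Lemma run_rec_pair O s f g a k :
  run O s (pRec f g) (pair a k) =
  rec_iter (run O s f a) (fun k y => run O s g (pair a (pair k y))) k.
Proof. by rewrite /= unpair_pair. Qed.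

Lemma run_sound O s e x y : run O s e x = Some y -> eval O e x y.
Proof.
elim: e x y => [||||| f IHf g IHg | f IHf g IHg | f IHf g IHg | f IHf] x y /=.
1-5: by case=> <-; constructor.
- case E: (run O s g x) => [z|] //= H.
  exact: evComp (IHg _ _ E) (IHf _ _ H).
- case E1: (run O s f x) => [a|] //; case E2: (run O s g x) => [b|] // [<-].
  exact: evPair (IHf _ _ E1) (IHg _ _ E2).
- rewrite -[in eval _ _ x](pair_unpair x).
  move: (unpair x).1 (unpair x).2 => a k.
  elim: k y => [|k IHk] y /= H.
  + by apply: (@evRec0 _ _ g _ a); [rewrite unpair_pair | exact: IHf].
  + move: H; case E: (rec_iter _ _ k) => [z|] //= H.
    apply: (@evRecS _ _ _ _ a k z); first by rewrite unpair_pair.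
    * exact: IHk.
    * exact: IHg.
- move/mu_search_sound => [_ H2 H3]; constructor; first exact: IHf.
  by move=> k /H3 [v [Hv /IHf Hv']]; exists v.
Qed.

Lemma run_complete O e x y : eval O e x y ->
  exists s0, forall s, s0 <= s -> run O s e x = Some y.
Proof.
elim/eval_nested_ind => {e x y}; try by exists 0.
- move=> f g x y z _ [s1 H1] _ [s2 H2]; exists (maxn s1 s2) => s Hs /=.
  by rewrite H1 /= ?H2 //; lia.
- move=> f g x y z _ [s1 H1] _ [s2 H2]; exists (maxn s1 s2) => s Hs /=.
  by rewrite H1 ?H2 //; lia.
- by move=> f g x a y E _ [s1 H1]; exists s1 => s Hs /=; rewrite E; exact: H1.
- move=> f g x a k y z E _ [s1 H1] _ [s2 H2]; exists (maxn s1 s2) => s Hs /=.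
  rewrite E /=; have := H1 s; rewrite run_rec_pair => ->; last lia.
  by rewrite /= H2 //; lia.
- move=> f x n _ [s0 H0] Hlt.
  have [s1 Hs1] : exists s1, forall k, k < n -> exists v, v <> 0 /\
      forall s, s1 <= s -> run O s f (pair x k) = Some v.
    apply: bounded_uniform => [k u u' le [v [Hv H]]|k /Hlt [v [Hv [_ [u H]]]]].
    + by exists v; split=> // s Hs; exact: H (leq_trans le Hs).
    + by exists u, v.
  exists (maxn (maxn s0 s1) n.+1) => s Hs /=.
  apply: mu_search_complete => //; last lia.
  + by apply: H0; lia.
  + move=> k /Hs1 [v [Hv H]]; exists v; split => //; apply: H; lia.
Qed.

Lemma eval_det X e x y1 y2 : eval X e x y1 -> eval X e x y2 -> y1 = y2.
Proof.
move=> /run_complete [s1 H1] /run_complete [s2 H2].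
by have := H1 _ (leq_maxl s1 s2); rewrite H2 ?leq_maxr // => -[].
Qed.

Lemma eval_eq X e x y y' : eval X e x y -> y = y' -> eval X e x y'.
Proof. by move=> H <-. Qed.

Lemma eval_fst_pair X x y : eval X pFst (pair x y) x.
Proof. by apply: eval_eq (evFst X _) _; rewrite unpair_pair. Qed.

Lemma eval_snd_pair X x y : eval X pSnd (pair x y) y.
Proof. by apply: eval_eq (evSnd X _) _; rewrite unpair_pair. Qed.

Lemma eval_rec X f g a (F : nat -> nat) :
  eval X f a (F 0) -> (forall k, eval X g (pair a (pair k (F k))) (F k.+1)) ->
  forall k, eval X (pRec f g) (pair a k) (F k).
Proof.
move=> H0 HS; elim=> [|k IH].
- by apply: (@evRec0 _ _ g _ a) H0; rewrite unpair_pair.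
- by apply: (@evRecS _ _ _ _ a k (F k)) IH (HS k); rewrite unpair_pair.
Qed.

Definition pId := pPair pFst pSnd.
Lemma eval_id X x : eval X pId x x.
Proof. exact: eval_eq (evPair (evFst X x) (evSnd X x)) (pair_unpair x). Qed.

Fixpoint pConst c := if c is c'.+1 then pComp pSucc (pConst c') else pZero.
Lemma eval_const X c x : eval X (pConst c) x c.
Proof. by elim: c => [|c IH] /=; [constructor | exact: evComp IH (evSucc _ _)]. Qed.

Definition pCond := pRec pZero pFst.
Lemma eval_cond X v r : eval X pCond (pair v r) (if r is 0 then 0 else v).
Proof.
apply: (eval_rec (F := fun r => if r is 0 then 0 else v)); first constructor.
by move=> k; exact: eval_fst_pair.
Qed.

Definition pPred := pComp (pRec pZero (pComp pFst pSnd)) (pPair pZero pId).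
Lemma eval_pred X x : eval X pPred x x.-1.
Proof.
apply: evComp (evPair (evZero _ _) (eval_id _ _)) _.
apply: (eval_rec (F := predn)); first constructor.
by move=> k; apply: evComp (eval_snd_pair _ _ _) (eval_fst_pair _ _ _).
Qed.

Definition pSub := pRec pId (pComp pPred (pComp pSnd pSnd)).
Lemma eval_sub X a b : eval X pSub (pair a b) (a - b).
Proof.
apply: (eval_rec (F := fun b => a - b)); first by rewrite subn0; exact: eval_id.
move=> k; apply: evComp (evComp (eval_snd_pair _ _ _) (eval_snd_pair _ _ _)) _.
by apply: eval_eq (eval_pred _ _) _; lia.
Qed.

Definition pAdd := pRec pId (pComp pSucc (pComp pSnd pSnd)).
Lemma eval_add X a b : eval X pAdd (pair a b) (a + b).
Proof.
apply: (eval_rec (F := fun b => a + b)); first by rewrite addn0; exact: eval_id.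
move=> k; apply: evComp (evComp (eval_snd_pair _ _ _) (eval_snd_pair _ _ _)) _.
by apply: eval_eq (evSucc _ _) _; lia.
Qed.

(* [q./2] is the least [h] with [(q - (h + h)).-1 = 0]. *)
Definition pHalfTest := pComp pPred (pComp pSub (pPair pFst (pComp pAdd (pPair pSnd pSnd)))).
Definition pHalf := pMu pHalfTest.

Lemma eval_half_test X q h : eval X pHalfTest (pair q h) (q - (h + h)).-1.
Proof.
apply: evComp (eval_pred _ _); apply: evComp (eval_sub _ _ _).
apply: evPair; first exact: eval_fst_pair.
by apply: evComp (eval_add _ _ _); apply: evPair; exact: eval_snd_pair.
Qed.

Lemma eval_half X q : eval X pHalf q q./2.
Proof.
have := odd_double_half q; rewrite -addnn => Hq.
constructor; first by apply: eval_eq (eval_half_test _ _ _) _; case: (odd q) Hq => /=; lia.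
move=> k Hk; exists (q - (k + k)).-1; split; last exact: eval_half_test.
lia.
Qed.

Definition pParity := pComp pSub (pPair pId (pComp pAdd (pPair pHalf pHalf))).
Lemma eval_parity X q : eval X pParity q (odd q).
Proof.
apply: eval_eq.
  apply: (evComp _ (eval_sub _ q (q./2 + q./2))).
  apply: evPair; first exact: eval_id.
  by apply: evComp (eval_add _ _ _); apply: evPair; exact: eval_half.
by have := odd_double_half q; rewrite -addnn; case: (odd q) => /=; lia.
Qed.

Definition pOr := pComp (pRec pId (pConst 1)) (pPair pSnd pFst).
Lemma eval_or X a b : eval X pOr (pair a b) (if a is 0 then b else 1).
Proof.
apply: evComp (evPair (eval_snd_pair _ _ _) (eval_fst_pair _ _ _)) _.
apply: (eval_rec (F := fun a => if a is 0 then b else 1)); first exact: eval_id.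
by move=> k; exact: eval_const.
Qed.

Definition pAnd := pComp pCond (pPair pSnd pFst).
Lemma eval_and X a b : eval X pAnd (pair a b) (if a is 0 then 0 else b).
Proof.
apply: evComp (evPair (eval_snd_pair _ _ _) (eval_fst_pair _ _ _)) _.
exact: eval_cond.
Qed.

Definition pNot := pComp pSub (pPair (pConst 1) pId).
Lemma eval_not X a : eval X pNot a (1 - a).
Proof.
apply: evComp (evPair (eval_const _ _ _) (eval_id _ _)) _.
exact: eval_sub.
Qed.

(* A number [t] codes the stream whose [r]-th entry is the first component of
   [t] after dropping the first component [r] times. *)
Definition stream_nth t r := (unpair (iter r (fun z => (unpair z).2) t)).1.

Definition pStreamNth := pComp pFst (pRec pId (pComp pSnd (pComp pSnd pSnd))).
Lemma eval_stream_nth X t r : eval X pStreamNth (pair t r) (stream_nth t r).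
Proof.
apply: (evComp _ (evFst X _)).
apply: (eval_rec (F := fun r => iter r (fun z => (unpair z).2) t)); first exact: eval_id.
move=> k; apply: evComp (evComp (eval_snd_pair _ _ _) (eval_snd_pair _ _ _)) _.
exact: evSnd.
Qed.

Lemma stream_of_seq (bs : seq bool) :
  exists t, forall r, (stream_nth t r != 0) = nth false bs r.
Proof.
elim: bs => [|b bs [t Ht]].
- exists 0 => r; rewrite nth_nil /stream_nth.
  suff -> : iter r (fun z => (unpair z).2) 0 = 0 by [].
  by elim: r => //= r ->.
- exists (pair b t) => [[|r]].
  + by rewrite /stream_nth /= unpair_pair; case: b.
  + by rewrite /stream_nth iterSr /= unpair_pair -Ht.
Qed.

Definition enc_opt (o : option nat) := if o is Some y then y.+1 else 0.

(* Programs below read their input as [pair p x]; the stage bound of the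
   simulated [run] is [(unpair p).1], so [p] also carries the oracle's code. *)
Definition rec_step (g' : prf) :=
  pComp pCond (pPair (pComp g' (pPair (pComp pFst pFst) (pPair (pComp pSnd pFst)
     (pPair (pComp pFst pSnd) (pComp pPred (pComp pSnd pSnd)))))) (pComp pSnd pSnd)).
Definition compile_rec (f' g' : prf) :=
  pComp (pRec f' (rec_step g')) (pPair (pPair pFst (pComp pFst pSnd)) (pComp pSnd pSnd)).

Definition mu_value (f' : prf) :=
  pComp f' (pPair (pComp pFst pFst) (pPair (pComp pSnd pFst) pSnd)).
Definition mu_fuel := pComp pSub (pPair (pComp pFst (pComp pFst pFst)) pSnd).
Definition mu_test (f' : prf) := pComp pCond (pPair (pComp pPred (mu_value f')) mu_fuel).
Definition compile_mu (f' : prf) :=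
  let stop := pPair pId (pMu (mu_test f')) in
  pComp pCond (pPair (pComp pCond (pPair (pComp pSucc (pMu (mu_test f')))
                                         (pComp (mu_value f') stop)))
                     (pComp mu_fuel stop)).

Fixpoint compile (Op : prf) (e : prf) : prf :=
  match e with
  | pZero => pConst 1
  | pSucc => pComp pSucc (pComp pSucc pSnd)
  | pFst => pComp pSucc (pComp pFst pSnd)
  | pSnd => pComp pSucc (pComp pSnd pSnd)
  | pOracle => pComp pSucc Op
  | pComp f g => let f' := compile Op f in let g' := compile Op g in
      pComp pCond (pPair (pComp f' (pPair pFst (pComp pPred g'))) g')
  | pPair f g => let f' := compile Op f in let g' := compile Op g in
      pComp pCond (pPair (pComp pCond (pPair (pComp pSucc
        (pPair (pComp pPred f') (pComp pPred g'))) g')) f')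
  | pRec f g => compile_rec (compile Op f) (compile Op g)
  | pMu f => compile_mu (compile Op f)
  end.

Lemma mu_search_min h s n0 : n0 <= s ->
  (forall k, k < n0 -> exists v, v <> 0 /\ h k = Some v) ->
  (n0 < s -> h n0 = None \/ h n0 = Some 0) ->
  mu_search h 0 s = if n0 < s then (if h n0 is Some 0 then Some n0 else None) else None.
Proof.
move=> Hs Hlt Hn0.
suff H fuel m : m <= n0 -> m + fuel = s ->
  mu_search h m fuel = if n0 < s then (if h n0 is Some 0 then Some n0 else None) else None.
  exact: H.
elim: fuel m => [|fuel IH] m Hm Hf /=; first by have -> : n0 < s = false by lia.
case: (ltngtP m n0) => Hc.
- have [[|v] [Hv ->]] := Hlt m Hc => //; apply: IH; lia.
- lia.
- subst m; have -> : n0 < s by lia.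
  by have [->|->] := Hn0 ltac:(lia).
Qed.

Section Compile.

Variables (X : nat -> bool) (Of : nat -> nat -> bool).

Definition simulates (e' e : prf) :=
  forall p x, eval X e' (pair p x) (enc_opt (run (Of p) (unpair p).1 e x)).

Lemma compile_rec_correct f g f' g' :
  simulates f' f -> simulates g' g -> simulates (compile_rec f' g') (pRec f g).
Proof.
move=> IHf IHg p x; apply: evComp.
  apply: evPair; last exact: evComp (eval_snd_pair _ _ _) (evSnd _ _).
  by apply: evPair; [exact: eval_fst_pair | apply: evComp (eval_snd_pair _ _ _) (evFst _ _)].
apply: (eval_rec (F := fun k => enc_opt (rec_iter (run (Of p) (unpair p).1 f (unpair x).1)
   (fun k y => run (Of p) (unpair p).1 g (pair (unpair x).1 (pair k y))) k))).
  exact: IHf.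
move=> k /=; apply: eval_eq.
  apply: evComp (eval_cond _ _ _).
  apply: evPair; last exact: evComp (eval_snd_pair _ _ _) (eval_snd_pair _ _ _).
  apply: evComp (IHg p _).
  apply: evPair; first exact: evComp (eval_fst_pair _ _ _) (eval_fst_pair _ _ _).
  apply: evPair; first exact: evComp (eval_fst_pair _ _ _) (eval_snd_pair _ _ _).
  apply: evPair; first exact: evComp (eval_snd_pair _ _ _) (eval_fst_pair _ _ _).
  exact: evComp (evComp (eval_snd_pair _ _ _) (eval_snd_pair _ _ _)) (eval_pred _ _).
by case: (rec_iter _ _ k).
Qed.

Section MuStep.

Variables (f f' : prf) (p x : nat).
Hypothesis IHf : simulates f' f.
Let s := (unpair p).1.
Let h n := run (Of p) s f (pair x n).

Lemma eval_mu_value n : eval X (mu_value f') (pair (pair p x) n) (enc_opt (h n)).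
Proof.
apply: evComp (IHf p _).
apply: evPair; first exact: evComp (eval_fst_pair _ _ _) (eval_fst_pair _ _ _).
by apply: evPair; [apply: evComp (eval_fst_pair _ _ _) (eval_snd_pair _ _ _) | exact: eval_snd_pair].
Qed.

Lemma eval_mu_fuel n : eval X mu_fuel (pair (pair p x) n) (s - n).
Proof.
apply: evComp (eval_sub _ _ _); apply: evPair; last exact: eval_snd_pair.
apply: (evComp _ (evFst X p)).
exact: evComp (eval_fst_pair _ _ _) (eval_fst_pair _ _ _).
Qed.

Lemma eval_mu_test n : eval X (mu_test f') (pair (pair p x) n)
  (if s - n is 0 then 0 else (enc_opt (h n)).-1).
Proof.
apply: evComp (eval_cond _ _ _); apply: evPair (eval_mu_fuel n).
exact: evComp (eval_mu_value n) (eval_pred _ _).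
Qed.

(* The simulated search stops at the first [n] that is out of fuel or where
   [f] diverges or returns [0]. *)
Lemma compile_mu_correct : eval X (compile_mu f') (pair p x) (enc_opt (run (Of p) s (pMu f) x)).
Proof.
have Pex : exists n, (s - n == 0) || (enc_opt (h n) <= 1) by exists s; rewrite subnn.
case: (ex_minnP Pex) => n0 Hn0 Hmin.
have Hn0s : n0 <= s by apply: Hmin; rewrite subnn.
have stop_before k : k < n0 -> exists v, v <> 0 /\ h k = Some v.
  move=> Hk; case Ek: ((s - k == 0) || (enc_opt (h k) <= 1)); first by have := Hmin k Ek; lia.
  by move: Ek; case: (h k) => [[|v]|] //=; rewrite ?orbT // => _; exists v.+1.
have HN : eval X (pMu (mu_test f')) (pair p x) n0.
  constructor.
  + apply: eval_eq (eval_mu_test n0) _.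
    by move: Hn0; case: (s - n0) => //= _; case: (h n0) => [[|v]|].
  + move=> k Hk; exists (if s - k is 0 then 0 else (enc_opt (h k)).-1).
    split; last exact: eval_mu_test.
    have [v [Hv Ev]] := stop_before k Hk; rewrite Ev /=.
    by case: (s - k) (Hmin k) => [|?] Hm //; have := Hm isT; lia.
apply: eval_eq.
  apply: evComp (eval_cond _ _ _); apply: evPair; last first.
    exact: evComp (evPair (eval_id _ _) HN) (eval_mu_fuel n0).
  apply: evComp (eval_cond _ _ _); apply: evPair; first exact: evComp HN (evSucc _ _).
  exact: evComp (evPair (eval_id _ _) HN) (eval_mu_value n0).
rewrite /= (@mu_search_min h s n0) //.
- case: ltnP => Hc.
  + have -> : s - n0 = (s - n0).-1.+1 by lia.
    have E : s - n0 == 0 = false by lia.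
    by move: Hn0; rewrite E; case: (h n0) => [[|v]|].
  + by have -> : s - n0 = 0 by lia.
- move=> Hc; have E : s - n0 == 0 = false by lia.
  by move: Hn0; rewrite E; case: (h n0) => [[|v]|]; auto.
Qed.

End MuStep.

Lemma compile_correct Op (HO : forall p x, eval X Op (pair p x) (Of p x)) e :
  simulates (compile Op e) e.
Proof.
elim: e => [||||| f IHf g IHg | f IHf g IHg | f IHf g IHg | f IHf] p x /=.
- exact: (eval_const X 1 (pair p x)).
- exact: evComp (evComp (eval_snd_pair _ _ _) (evSucc _ _)) (evSucc _ _).
- exact: evComp (evComp (eval_snd_pair _ _ _) (evFst _ _)) (evSucc _ _).
- exact: evComp (evComp (eval_snd_pair _ _ _) (evSnd _ _)) (evSucc _ _).
- exact: evComp (HO p x) (evSucc _ _).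
- apply: eval_eq.
    apply: evComp (eval_cond _ _ _); apply: evPair (IHg p x).
    apply: evComp (IHf p _); apply: evPair (eval_fst_pair _ _ _) _.
    exact: evComp (IHg p x) (eval_pred _ _).
  by case: (run _ _ g x).
- apply: eval_eq.
    apply: evComp (eval_cond _ _ _); apply: evPair (IHf p x).
    apply: evComp (eval_cond _ _ _); apply: evPair (IHg p x).
    apply: evComp (evSucc _ _).
    by apply: evPair; apply: evComp (eval_pred _ _); [exact: IHf | exact: IHg].
  by case: (run _ _ f x); case: (run _ _ g x).
- exact: compile_rec_correct.
- exact: compile_mu_correct.
Qed.

End Compile.

(* The stem coded by [t0] together with the elements of [X] selected by [t]. *)
Definition variant (t0 : nat) (X : nat -> bool) (t : nat) (r : nat) : bool :=
  (stream_nth t0 r != 0) || ((stream_nth t r != 0) && X r).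

Definition variant_oracle (t0 : nat) (fX : prf) : prf :=
  let half := pComp pHalf pSnd in
  let par := pComp pParity pSnd in
  let cbit := pComp pOracle half in
  let t := pComp pSnd pFst in
  let Fbit := pComp pStreamNth (pPair (pConst t0) half) in
  let sbit := pComp pStreamNth (pPair t half) in
  let Xbit := pComp fX half in
  let gbit := pComp pOr (pPair Fbit (pComp pAnd (pPair sbit Xbit))) in
  pComp pOr (pPair (pComp pAnd (pPair par cbit)) (pComp pAnd (pPair (pComp pNot par) gbit))).

Lemma eval_variant_oracle C t0 (X : nat -> bool) fX (HX : forall q, eval C fX q (X q)) p q :
  eval C (variant_oracle t0 fX) (pair p q) (join (variant t0 X (unpair p).2) C q).
Proof.
have Hh : eval C (pComp pHalf pSnd) (pair p q) q./2.
  exact: evComp (eval_snd_pair _ _ _) (eval_half _ _).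
have Hp : eval C (pComp pParity pSnd) (pair p q) (odd q).
  exact: evComp (eval_snd_pair _ _ _) (eval_parity _ _).
apply: eval_eq.
  apply: evComp (eval_or _ _ _); apply: evPair.
    apply: evComp (eval_and _ _ _); apply: evPair Hp _.
    exact: evComp Hh (evOracle _ _).
  apply: evComp (eval_and _ _ _); apply: evPair; first exact: evComp Hp (eval_not _ _).
  apply: evComp (eval_or _ _ _); apply: evPair.
    exact: evComp (evPair (eval_const _ _ _) Hh) (eval_stream_nth _ _ _).
  apply: evComp (eval_and _ _ _); apply: evPair.
    apply: evComp (eval_stream_nth _ _ _); apply: evPair Hh.
    exact: evComp (eval_fst_pair _ _ _) (evSnd _ _).
  exact: evComp Hh (HX _).
rewrite /join /variant; case: (odd q) => /=; first by case: (C q./2).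
by case: (stream_nth t0 q./2) => [|?] /=; case: (stream_nth (unpair p).2 q./2) => [|?] /=;
  case: (X _).
Qed.

(* Searches for a [k] coding a stage [(unpair k).1] and a selection
   [(unpair k).2] under which the simulated run of [e] halts. *)
Definition variant_test (t0 : nat) (fX : prf) (e : prf) :=
  pComp pNot (pComp (compile (variant_oracle t0 fX) e) (pPair pSnd pFst)).
Definition search_variants (t0 : nat) (fX : prf) (e : prf) := pMu (variant_test t0 fX e).

Lemma search_variants_spec C t0 (X : nat -> bool) fX (HX : forall q, eval C fX q (X q)) e x :
  (exists y, eval C (search_variants t0 fX e) x y) <->
  (exists t z, eval (join (variant t0 X t) C) e x z).
Proof.
pose tv k := 1 - enc_opt (run (join (variant t0 X (unpair k).2) C) (unpair k).1 e x).
have Ht k : eval C (variant_test t0 fX e) (pair x k) (tv k).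
  apply: evComp (eval_not _ _); apply: evComp (compile_correct (eval_variant_oracle t0 HX) e k x).
  exact: evPair (eval_snd_pair _ _ _) (eval_fst_pair _ _ _).
split.
- move=> [y Hy].
  have Hzero : eval C (variant_test t0 fX e) (pair x y) 0 by inversion Hy.
  have := eval_det Hzero (Ht y); rewrite /tv.
  case E: (run _ _ e x) => [z|] //= _.
  by exists (unpair y).2, z; exact: run_sound E.
- move=> [t [z /run_complete [s0 Hs0]]].
  have Pex : exists k, tv k == 0 by exists (pair s0 t); rewrite /tv unpair_pair /= Hs0.
  case: (ex_minnP Pex) => k /eqP Hk Hmin.
  exists k; constructor; first by rewrite -Hk; exact: Ht.
  move=> j Hj; exists (tv j); split; last exact: Ht.
  by move=> E; have := Hmin j; rewrite E eqxx => /(_ isT); lia.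
Qed.

Definition computable_in (C X : nat -> bool) := exists f, forall q, eval C f q (X q).

Lemma computable_in_and C X Y :
  computable_in C X -> computable_in C Y -> computable_in C (fun q => X q && Y q).
Proof.
move=> [f Hf] [g Hg]; exists (pComp pAnd (pPair f g)) => q.
by apply: eval_eq (evComp (evPair (Hf q) (Hg q)) (eval_and _ _ _)) _; case: (X q).
Qed.

Lemma computable_in_not C X : computable_in C X -> computable_in C (fun q => ~~ X q).
Proof.
move=> [f Hf]; exists (pComp pNot f) => q.
by apply: eval_eq (evComp (Hf q) (eval_not _ _)) _; case: (X q).
Qed.

Lemma computable_in_ge C U : computable_in C (fun q => U <= q).
Proof.
exists (pComp pNot (pComp pSub (pPair (pConst U) pId))) => q.
apply: eval_eq.
  exact: evComp (evComp (evPair (eval_const _ _ _) (eval_id _ _)) (eval_sub _ _ _)) (eval_not _ _).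
by case: leqP; lia.
Qed.

Lemma computable_in_row C R i : unif_computable C R -> computable_in C (R i).
Proof.
move=> [eR HR]; exists (pComp eR (pPair (pConst i) pId)) => q.
exact: evComp (evPair (eval_const _ _ _) (eval_id _ _)) (HR i q).
Qed.

Lemma agree_below_join u G G' C :
  agree_below u G G' -> agree_below u (join G C) (join G' C).
Proof.
move=> H q Hq; rewrite /join; case: (odd q) => //; apply: H.
by have := odd_double_half q; rewrite -addnn; lia.
Qed.

Lemma infinite_split X Y : infinite_set X ->
  infinite_set (fun q => X q && Y q) \/ infinite_set (fun q => X q && ~~ Y q).
Proof.
move=> HX; case: (classic (infinite_set (fun q => X q && Y q))) => H; [by left | right => N].
have [N0 HN0] : exists N0, forall q, N0 <= q -> X q -> ~~ Y q.
  apply: NNPP => Hn; apply: H => M.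
  apply: NNPP => Hm; apply: Hn; exists M => q Hq HXq.
  by apply/negP => HY; apply: Hm; exists q; rewrite HXq HY.
have [q [Hq HXq]] := HX (maxn N N0).
by exists q; rewrite HXq HN0 //; lia.
Qed.

Record cond := Cond { stem : nat -> bool; reservoir : nat -> bool; bound : nat }.

Definition is_condition C c := [/\ (forall q, stem c q -> q < bound c),
  (forall q, reservoir c q -> bound c <= q),
  infinite_set (reservoir c) & computable_in C (reservoir c)].

Definition extends c c' := [/\ (forall q, stem c q -> stem c' q),
  (forall q, stem c' q -> stem c q \/ reservoir c q),
  (forall q, reservoir c' q -> reservoir c q) & bound c <= bound c'].

Definition satisfies (G : nat -> bool) c :=
  (forall q, stem c q -> G q) /\ (forall q, G q -> stem c q \/ reservoir c q).

Lemma extends_refl c : extends c c.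
Proof. by split => // q; left. Qed.

Lemma extends_trans c1 c2 c3 : extends c1 c2 -> extends c2 c3 -> extends c1 c3.
Proof.
move=> [a1 b1 c1' d1] [a2 b2 c2' d2]; split; auto.
- by move=> q /b2 [/b1|/c1']; auto.
- exact: leq_trans d2.
Qed.

Lemma satisfies_extends G c c' : extends c c' -> satisfies G c' -> satisfies G c.
Proof.
move=> [a b c1 _] [h1 h2]; split; auto.
by move=> q /h2 [/b|/c1]; auto.
Qed.

Lemma extend_grow C c N : is_condition C c ->
  exists c', [/\ is_condition C c', extends c c' & exists q, N <= q /\ stem c' q].
Proof.
move=> [h1 h2 h3 h4].
have [q [Hq HXq]] := h3 (maxn N (bound c)).
have Hqb := h2 q HXq.
exists (Cond (fun r => stem c r || (r == q)) (fun r => reservoir c r && (q.+1 <= r)) q.+1).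
split; [split|split|] => /=.
- by move=> r /orP [/h1|/eqP ->]; lia.
- by move=> r /andP [].
- move=> M; have [r [Hr HXr]] := h3 (maxn M q.+1); exists r.
  by rewrite HXr /=; lia.
- exact: computable_in_and h4 (computable_in_ge _ _).
- by move=> r ->.
- by move=> r /orP [->|/eqP ->]; auto.
- by move=> r /andP [].
- lia.
- by exists q; rewrite eqxx orbT; split => //; lia.
Qed.

Lemma extend_homogeneous C c (Y : nat -> bool) :
  computable_in C Y -> is_condition C c ->
  exists c', [/\ is_condition C c', extends c c' &
    (forall q, reservoir c' q -> Y q) \/ (forall q, reservoir c' q -> ~~ Y q)].
Proof.
move=> HY [h1 h2 h3 h4].
have shrink (Z : nat -> bool) : computable_in C Z -> infinite_set (fun q => reservoir c q && Z q) ->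
    is_condition C (Cond (stem c) (fun q => reservoir c q && Z q) (bound c)) /\
    extends c (Cond (stem c) (fun q => reservoir c q && Z q) (bound c)).
  move=> HZ Hinf; split; split => //=.
  + by move=> q /andP [/h2].
  + exact: computable_in_and.
  + by move=> q; left.
  + by move=> q /andP [].
case: (infinite_split Y h3) => Hinf.
- have [Hc He] := shrink _ HY Hinf.
  by exists (Cond (stem c) (fun q => reservoir c q && Y q) (bound c)); split => //; left => q /andP [].
- have [Hc He] := shrink _ (computable_in_not HY) Hinf.
  by exists (Cond (stem c) (fun q => reservoir c q && ~~ Y q) (bound c)); split => //; right => q /andP [].
Qed.

Lemma satisfies_agree_below G c : satisfies G c ->
  (forall q, reservoir c q -> bound c <= q) -> agree_below (bound c) (stem c) G.
Proof.
move=> [HF HG] Hres q Hq.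
by apply/idP/idP => [/HG [//|/Hres]|/HF //]; rewrite leqNgt Hq.
Qed.

Lemma stem_stream C c : is_condition C c -> exists t0, forall r, (stream_nth t0 r != 0) = stem c r.
Proof.
move=> [h1 _ _ _].
have [t0 Ht0] := stream_of_seq [seq stem c q | q <- iota 0 (bound c)].
exists t0 => r; rewrite Ht0.
case: (ltnP r (bound c)) => Hr.
- by rewrite (nth_map 0) ?size_iota // nth_iota.
- rewrite nth_default ?size_map ?size_iota //.
  by case E: (stem c r) => //; have := h1 r E; lia.
Qed.

Definition decides C (A0 A1 : str -> Prop) m N (e : prf) (M : smatrix m N) c :=
  disjoint_matrix M ->
  (exists V, is_valuation M V /\ diagonalizes V A0 A1 /\
     forall G, satisfies G c -> exists y, eval (join G C) e (code_val V) y) \/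
  (exists s, forall G, satisfies G c -> forall V, is_valuation M V -> val_gt V s ->
     forall y, ~ eval (join G C) e (code_val V) y).

Lemma decides_extends C A0 A1 m N e (M : smatrix m N) c c' :
  extends c c' -> decides C A0 A1 e M c -> decides C A0 A1 e M c'.
Proof.
move=> He H Hd; case: (H Hd) => [[V [h1 [h2 h3]]]|[s Hs]].
- by left; exists V; split => //; split => // G /(satisfies_extends He); exact: h3.
- by right; exists s => G /(satisfies_extends He); exact: Hs.
Qed.

Section Decide.

Variables (C : nat -> bool) (A0 A1 : str -> Prop) (m N : nat) (e : prf) (M : smatrix m N).
Variables (c : cond) (t0 : nat) (fX : prf).
Hypothesis c_cond : is_condition C c.
Hypothesis t0_stem : forall r, (stream_nth t0 r != 0) = stem c r.
Hypothesis fX_reservoir : forall q, eval C fX q (reservoir c q).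

(* The formula [psi] of the proof idea. *)
Definition halts_on_variant (V : valuation m N) :=
  exists y, eval C (search_variants t0 fX e) (code_val V) y.

Lemma variant_of_satisfies G u : satisfies G c ->
  exists t, agree_below u G (variant t0 (reservoir c) t).
Proof.
move=> [HG1 HG2]; have [t Ht] := stream_of_seq [seq G r | r <- iota 0 u].
exists t => r Hr; rewrite /variant t0_stem Ht (nth_map 0) ?size_iota // nth_iota // add0n.
case E: (G r); case E2: (stem c r) => //=.
- by case: (HG2 r E) => [|->]; [rewrite E2|].
- by rewrite (HG1 r E2) in E.
Qed.

Lemma decide_inessential : ~ essential halts_on_variant M -> decides C A0 A1 e M c.
Proof.
move=> Hess _; right.
have [s Hs] : exists s, ~ exists V, [/\ is_valuation M V, val_gt V s & halts_on_variant V].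
  apply: NNPP => H; apply: Hess => s; apply: NNPP => H'; apply: H; exists s.
  by move=> [V [a b c']]; apply: H'; exists V.
exists s => G HG V HvV Hgt y /eval_use [u Hu].
have [t Ht] := variant_of_satisfies u HG.
apply: Hs; exists V; split => //.
apply/(search_variants_spec t0 fX_reservoir e (code_val V)); exists t, y.
by apply: Hu; apply: agree_below_join.
Qed.

Lemma decide_essential V t z : is_valuation M V -> diagonalizes V A0 A1 ->
  eval (join (variant t0 (reservoir c) t) C) e (code_val V) z ->
  exists c', [/\ is_condition C c', extends c c' & decides C A0 A1 e M c'].
Proof.
move=> HvV Hdiag /eval_use [u Hu].
have [h1 h2 h3 h4] := c_cond.
pose U := maxn (bound c) u.
pose c' := Cond (fun q => variant t0 (reservoir c) t q && (q < U))
                (fun q => reservoir c q && (U <= q)) U.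
have c'_cond : is_condition C c'.
  split => /=; [by move=> q /andP [] | by move=> q /andP [] | |].
  + move=> K; have [r [Hr HXr]] := h3 (maxn K U); exists r.
    by rewrite HXr /=; lia.
  + exact: computable_in_and h4 (computable_in_ge _ _).
exists c'; split => //.
- split => /=.
  + move=> q Hq; rewrite /variant t0_stem Hq /=; have := h1 q Hq; lia.
  + move=> q /andP [Hg _]; move: Hg; rewrite /variant t0_stem => /orP [->|/andP [_ ->]]; auto.
  + by move=> q /andP [].
  + exact: leq_maxl.
- move=> _; left; exists V; split => //; split => // G HG.
  exists z; apply: Hu; apply: agree_below_join => r Hr.
  have -> : variant t0 (reservoir c) t r = stem c' r by rewrite /= (leq_trans Hr (leq_maxr _ _)) andbT.
  by apply: (satisfies_agree_below HG); [case: c'_cond | exact: leq_trans Hr (leq_maxr _ _)].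
Qed.

End Decide.

Lemma extend_decide C A0 A1 n (fairC : n_fair n C A0 A1) c m e (M : smatrix m (2 ^ n * m)) :
  is_condition C c -> exists c', [/\ is_condition C c', extends c c' & decides C A0 A1 e M c'].
Proof.
move=> Hc; have [t0 Ht0] := stem_stream Hc.
have [_ _ _ [fX HX]] := Hc.
case: (classic (disjoint_matrix M)) => Hd; last first.
  by exists c; split; [| exact: extends_refl | move=> /Hd].
case: (classic (essential (halts_on_variant C e t0 fX) M)) => Hess; last first.
  by exists c; split; [| exact: extends_refl | exact: decide_inessential].
have Hsig : sigma01 C (@halts_on_variant C m (2 ^ n * m) e t0 fX) by exists (search_variants t0 fX e).
have [V [HvV [Hdiag Hpsi]]] := fairC m _ M Hsig Hd Hess.
have [t [z Hz]] := (search_variants_spec t0 HX e (code_val V)).1 Hpsi.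
exact: (decide_essential Hc Ht0 HvV Hdiag Hz).
Qed.

Fixpoint prf_tree (e : prf) : GenTree.tree nat :=
  match e with
  | pZero => GenTree.Node 0 [::]
  | pSucc => GenTree.Node 1 [::]
  | pFst => GenTree.Node 2 [::]
  | pSnd => GenTree.Node 3 [::]
  | pOracle => GenTree.Node 4 [::]
  | pComp f g => GenTree.Node 5 [:: prf_tree f; prf_tree g]
  | pPair f g => GenTree.Node 6 [:: prf_tree f; prf_tree g]
  | pRec f g => GenTree.Node 7 [:: prf_tree f; prf_tree g]
  | pMu f => GenTree.Node 8 [:: prf_tree f]
  end.

Lemma prf_tree_inj : injective prf_tree.
Proof.
elim=> [||||| f IHf g IHg | f IHf g IHg | f IHf g IHg | f IHf]
       [||||| f' g' | f' g' | f' g' | f'] //= [];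
  by [move=> /IHf -> | move=> /IHf -> /IHg ->].
Qed.

Definition table m N (M : smatrix m N) : seq (seq str) :=
  [seq [seq M i j | j <- enum 'I_N] | i <- enum 'I_m].

Lemma table_inj m N : injective (@table m N).
Proof.
move=> M M' H; apply: functional_extensionality => i; apply: functional_extensionality => j.
have E (M0 : smatrix m N) : M0 i j = nth [::] (nth [::] (table M0) i) j.
  rewrite /table (nth_map i) ?size_enum_ord ?ltn_ord // nth_ord_enum.
  by rewrite (nth_map j) ?size_enum_ord ?ltn_ord // nth_ord_enum.
by rewrite !E H.
Qed.

Definition req_code n m (e : prf) (M : smatrix m (2 ^ n * m)) : nat :=
  pickle ((m, (prf_tree e, table M)) : nat * (GenTree.tree nat * seq (seq (seq bool)))).

Lemma req_code_inj_dim n m m' e e' (M : smatrix m (2 ^ n * m)) (M' : smatrix m' (2 ^ n * m')) :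
  req_code e M = req_code e' M' -> m = m'.
Proof. by move=> /(pcan_inj (@pickleK _)) []. Qed.

Lemma req_code_inj n m e e' (M M' : smatrix m (2 ^ n * m)) :
  req_code e M = req_code e' M' -> e = e' /\ M = M'.
Proof.
move=> /(pcan_inj (@pickleK _)) [/prf_tree_inj He /table_inj HM].
by split.
Qed.

Definition meets_req C A0 A1 n (R : nat -> nat -> bool) j c :=
  [/\ exists q, j <= q /\ stem c q,
      (forall q, reservoir c q -> R j q) \/ (forall q, reservoir c q -> ~~ R j q) &
      forall m e (M : smatrix m (2 ^ n * m)), req_code e M = j -> decides C A0 A1 e M c].

Lemma extend_decide_code C A0 A1 n (fairC : n_fair n C A0 A1) j c : is_condition C c ->
  exists c', [/\ is_condition C c', extends c c' &
    forall m e (M : smatrix m (2 ^ n * m)), req_code e M = j -> decides C A0 A1 e M c'].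
Proof.
move=> Hc; case: (classic (exists m e (M : smatrix m (2 ^ n * m)), req_code e M = j)).
- move=> [m [e [M HM]]].
  have [c' [Hc' He HD]] := extend_decide fairC e M Hc.
  exists c'; split => // m' e' M' HM'.
  rewrite -HM' in HM; have Hm := req_code_inj_dim HM; subst m'.
  by have [<- <-] := req_code_inj HM.
- move=> Hn; exists c; split => //; first exact: extends_refl.
  by move=> m e M HM; exfalso; apply: Hn; exists m, e, M.
Qed.

Lemma extend_req C A0 A1 n R (fairC : n_fair n C A0 A1) (HR : unif_computable C R) j c :
  is_condition C c -> exists c', is_condition C c' /\ (extends c c' /\ meets_req C A0 A1 n R j c').
Proof.
move=> Hc.
have [c1 [Hc1 He1 HD1]] := extend_decide_code fairC j Hc.
have [c2 [Hc2 He2 Hh2]] := extend_homogeneous (computable_in_row j HR) Hc1.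
have [c3 [Hc3 He3 Hg3]] := extend_grow j Hc2.
have He23 := extends_trans He2 He3.
exists c3; split => //; split; first exact: extends_trans He1 He23.
split => //.
- by have [_ _ sub _] := He3; case: Hh2 => H; [left|right] => q /sub /H.
- by move=> m e M HM; apply: decides_extends He23 (HD1 _ _ _ HM).
Qed.

Lemma dependent_sequence (T : Type) (P : T -> Prop) (Q : nat -> T -> T -> Prop) (x0 : T) :
  P x0 -> (forall j x, P x -> exists y, P y /\ Q j x y) ->
  exists xs : nat -> T, forall j, P (xs j) /\ Q j (xs j) (xs j.+1).
Proof.
move=> Hx0 step.
have choose j x : {y | P x -> P y /\ Q j x y}.
  apply: constructive_indefinite_description.
  case: (classic (P x)) => [/(step j) [y Hy]|Hx]; first by exists y.
  by exists x.
pose fix xs j := if j is j'.+1 then sval (choose j' (xs j')) else x0.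
have Pxs j : P (xs j) by elim: j => [|j IH] //=; exact: (proj1 (svalP (choose j (xs j)) IH)).
by exists xs => j; split; [exact: Pxs | exact: (proj2 (svalP (choose j (xs j)) (Pxs j)))].
Qed.

Lemma bool_of_prop (P : nat -> Prop) : exists G : nat -> bool, forall q, G q <-> P q.
Proof.
exists (fun q => if excluded_middle_informative (P q) then true else false) => q.
by case: excluded_middle_informative.
Qed.

Definition trivial_cond := Cond (fun _ => false) (fun _ => true) 0.

Lemma trivial_cond_is_condition C : is_condition C trivial_cond.
Proof.
split => //=; first by move=> N; exists N.
by exists (pConst 1) => q; exact: eval_const.
Qed.

Section Generic.

Variables (C : nat -> bool) (A0 A1 : str -> Prop) (n : nat) (R : nat -> nat -> bool).
Variables (cs : nat -> cond) (G : nat -> bool).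
Hypothesis cs_step : forall j,
  is_condition C (cs j) /\ (extends (cs j) (cs j.+1) /\ meets_req C A0 A1 n R j (cs j.+1)).
Hypothesis G_union : forall q, G q <-> exists j, stem (cs j) q.

Lemma generic_extends i j : i <= j -> extends (cs i) (cs j).
Proof.
move/subnK <-; elim: (j - i) => [|k IH]; first exact: extends_refl.
exact: extends_trans IH (proj1 (proj2 (cs_step _))).
Qed.

Lemma satisfies_generic j : satisfies G (cs j).
Proof.
split=> [q Hq|q /G_union [j' Hj']]; first by apply/G_union; exists j.
case: (leqP j' j) => [/generic_extends [sub _ _ _]|/ltnW/generic_extends [_ sub _ _]].
- by left; exact: sub.
- exact: sub.
Qed.

Lemma generic_cohesive : cohesive R G.
Proof.
split=> [N|i].
- have [_ [_ [[q [Hq Hs]] _ _]]] := cs_step N.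
  by exists q; split => //; apply/G_union; exists N.+1.
- have [[Hb Hres _ _] _] := cs_step i.+1.
  have [_ [_ [_ Hh _]]] := cs_step i.
  have [_ HG] := satisfies_generic i.+1.
  case: Hh => Hh; [left|right]; exists (bound (cs i.+1)) => q Hq /HG [/Hb|/Hh //].
  all: by rewrite ltnNge Hq.
Qed.

Lemma generic_fair : n_fair n (join G C) A0 A1.
Proof.
move=> m phi M [e He] Hd Hess.
have [_ [_ [_ _ HD]]] := cs_step (req_code e M).
case: (HD m e M erefl Hd) => [[V [HvV [Hdiag Hev]]]|[s Hs]].
- by exists V; do 2!split => //; apply/He; exact: Hev (satisfies_generic _).
- have [V [HvV [Hgt /He [y Hy]]]] := Hess s.
  by case: (Hs G (satisfies_generic _) V HvV Hgt y Hy).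
Qed.

End Generic.

Theorem mainTheorem9 (A0 A1 : str -> Prop) (C : nat -> bool) (R : nat -> nat -> bool) :
  fair C A0 A1 -> unif_computable C R ->
  exists G : nat -> bool, cohesive R G /\ fair (join G C) A0 A1.
Proof.
move=> [n [n_pos fairC]] HR.
have [cs Hcs] := dependent_sequence (trivial_cond_is_condition C) (extend_req fairC HR).
have [G HG] := bool_of_prop (fun q => exists j, stem (cs j) q).
exists G; split; first exact: generic_cohesive Hcs HG.
by exists n; split => //; exact: generic_fair Hcs HG.
Qed.
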